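(* Let $K$ be an algebraically closed field of characteristic zero, $\mathcal{K} = K(t)$, $\alpha \in \mathcal{K}$, and integers $M \ge 2$, $N \ge 1$, $d \ge 2$. Then $\alpha$ realizes portrait $(M,N)$ for $f_d(z)=z^d+t$ if and only if $f_d^{M-1}(\alpha)$ realizes portrait $(1,N)$ for $f_d$.
   Context: For $c \in K$, let $f_{d,c}(z) = z^d+c$. A point $x$ has preperiodic portrait $(M,N)$ for a map $\phi$ if $M\ge0$ is minimal with $\phi^M(x)$ periodic and $\phi^M(x)$ has exact period $N$. We say $\beta \in \mathcal{K}$ realizes portrait $(M,N)$ for $f_d$ if there exists $c \in K$ such that the specialization $\beta(c)\in\mathbb{P}^1(K)$ (reduction modulo the place $t=c$) has portrait $(M,N)$ for $f_{d,c}$. *)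

From HB Require Import structures.
From mathcomp Require Import all_boot all_order all_algebra.
From mathcomp Require Import fraction.
Set Implicit Arguments. Unset Strict Implicit. Unset Printing Implicit Defensive.
Import Order.TTheory GRing.Theory Num.Theory.
Local Open Scope ring_scope.

(* P^1(K) is modelled as option K : Some z = the affine point z, None = infinity. *)

Notation ratfun K := {fraction {poly K}}.
Notation "x %:F" := (@FracField.tofrac _ x) : ring_scope.

Definition fdt (K : fieldType) (d : nat) (z : ratfun K) : ratfun K :=
  z ^+ d + ('X : {poly K})%:F.

Definition fdc (K : fieldType) (d : nat) (c : K) (x : option K) : option K :=
  match x with Some z => Some (z ^+ d + c) | None => None end.

Definition exact_period (T : Type) (phi : T -> T) (y : T) (N : nat) : Prop :=
  (0 < N)%N /\ iter N phi y = y /\ forall k, (0 < k < N)%N -> iter k phi y <> y.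

Definition is_periodic (T : Type) (phi : T -> T) (y : T) : Prop :=
  exists n, (0 < n)%N /\ iter n phi y = y.

Definition has_portrait (T : Type) (phi : T -> T) (x : T) (M N : nat) : Prop :=
  is_periodic phi (iter M phi x) /\
  (forall m, (m < M)%N -> ~ is_periodic phi (iter m phi x)) /\
  exact_period phi (iter M phi x) N.

(* value of p/q at t = c in P^1(K), for coprime p, q *)
Definition eval_pt (K : fieldType) (p q : {poly K}) (c : K) : option K :=
  if q.[c] == 0 then None else Some (p.[c] / q.[c]).

Definition specializes (K : fieldType) (beta : ratfun K) (c : K) (x : option K) : Prop :=
  exists p q : {poly K}, [/\ coprimep p q, q != 0,
    beta = p%:F / q%:F & x = eval_pt p q c].

Definition realizes (K : fieldType) (d : nat) (beta : ratfun K) (M N : nat) : Prop :=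
  exists c : K, exists x, specializes beta c x /\ has_portrait (fdc d c) x M N.

(* A point x has portrait (M,N) iff phi^{M-1}(x) has portrait (1,N), since
   periodicity propagates forward along an orbit.  Specialization at t = c
   commutes with f_d: for beta = p/q in lowest terms, f_d(beta) = (p^d + t q^d)/q^d
   is again in lowest terms, so its value at c is f_{d,c}(p(c)/q(c)), with
   infinity fixed.  As every element of K(t) has exactly one specialization at
   each c, the two realizability conditions hold for the same c. *)

From HB Require Import structures.
From mathcomp Require Import all_boot all_order all_algebra.
From mathcomp Require Import fraction generic_quotient.
Import GRing.Theory.
Set Implicit Arguments. Unset Strict Implicit.
Local Open Scope ring_scope.
Local Open Scope quotient_scope.

Section Portraits.

Variables (T : Type) (phi : T -> T).

Lemma is_periodic_next y : is_periodic phi y -> is_periodic phi (phi y).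
Proof.
move=> [n [n_gt0 per_y]]; exists n; split => //.
by rewrite -iterSr iterS per_y.
Qed.

Lemma is_periodic_iter x m n :
  (m <= n)%N -> is_periodic phi (iter m phi x) -> is_periodic phi (iter n phi x).
Proof.
move=> /subnK <-; elim: (n - m)%N => [|j IHj] per_m //.
by rewrite addSn /=; apply/is_periodic_next/IHj.
Qed.

Lemma has_portrait_iter_pred x M N : (0 < M)%N ->
  has_portrait phi x M N <-> has_portrait phi (iter M.-1 phi x) 1 N.
Proof.
move=> M_gt0; rewrite /has_portrait -iterD add1n prednK //.
split=> -[per_M [aper per_N]]; split=> //; split=> // m.
- by rewrite ltnS leqn0 => /eqP -> /=; apply: aper; rewrite prednK.
- move=> lt_mM /(is_periodic_iter (n := M.-1)) per_pred.
  by apply: (aper 0%N) => //; apply: per_pred; rewrite -ltnS prednK.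
Qed.

End Portraits.

Lemma fraction_tofrac_div (R : idomainType) (x : {fraction R}) :
  exists a b : R, b != 0 /\ x = a%:F / b%:F.
Proof.
set r := repr x.
exists r.1, r.2; split; first exact: denom_ratioP.
have r2_neq0 : r.2%:F != 0 by rewrite tofrac_eq0 denom_ratioP.
apply: (mulIf r2_neq0); rewrite divfK //.
have tofracE a : a%:F = \pi_({fraction R}) (Ratio a 1).
  by rewrite /FracField.tofrac; unlock.
rewrite -[x]reprK -/r !tofracE -[_ * _]FracField.pi_mul.
apply/eqmodP; rewrite /= FracField.equivfE /FracField.mulf.
rewrite !numden_Ratio ?oner_neq0 ?mulf_neq0 ?denom_ratioP ?oner_neq0 //.
by rewrite !mulr1 mulrC.
Qed.

Section Specialization.

Variable K : fieldType.
Implicit Types (p q : {poly K}) (beta : ratfun K) (c : K).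

Lemma coprimep_root_neq0 p q c : coprimep p q -> root q c -> p.[c] != 0.
Proof. by move=> cop_pq qc0; apply: contraTN qc0 => /(coprimep_root cop_pq). Qed.

Lemma specializes_exists beta c : exists x, specializes beta c x.
Proof.
have [a [b [b_neq0 ->]]] := fraction_tofrac_div beta.
set g := gcdp a b.
have g_neq0 : g != 0 by rewrite gcdp_eq0 negb_and b_neq0 orbT.
have ha : a %/ g * g = a by rewrite divpK // dvdp_gcdl.
have hb : b %/ g * g = b by rewrite divpK // dvdp_gcdr.
have bg_neq0 : b %/ g != 0 by apply: contraNneq b_neq0 => bg0; rewrite -hb bg0 mul0r.
exists (eval_pt (a %/ g) (b %/ g) c), (a %/ g), (b %/ g); split => //.
  by apply: coprimep_div_gcd; rewrite b_neq0 orbT.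
have gF_neq0 : g%:F != 0 :> ratfun K by rewrite tofrac_eq0.
by rewrite -{1}ha -{1}hb !tofracM invfM mulrACA divff // mulr1.
Qed.

Lemma specializes_unique beta c x y :
  specializes beta c x -> specializes beta c y -> x = y.
Proof.
move=> [p [q [cop_pq q_neq0 beta_pq ->]]] [p' [q' [cop_pq' q'_neq0 beta_pq' ->]]].
have qF_neq0 : q%:F != 0 :> ratfun K by rewrite tofrac_eq0.
have q'F_neq0 : q'%:F != 0 :> ratfun K by rewrite tofrac_eq0.
have cross : p * q' = p' * q.
  apply/eqP; rewrite -(tofrac_eq (R := {poly K})) !tofracM; apply/eqP.
  have := congr1 (fun z => z * q%:F * q'%:F) (etrans (esym beta_pq) beta_pq').
  by rewrite /= (divfK qF_neq0) => ->; rewrite (mulrAC _ q%:F) (divfK q'F_neq0).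
have cross_c : p.[c] * q'.[c] = p'.[c] * q.[c] by rewrite -!hornerM cross.
rewrite /eval_pt; have [qc0|qc_neq0] := eqVneq q.[c] 0;
  have [q'c0|q'c_neq0] := eqVneq q'.[c] 0 => //.
- move: cross_c; rewrite qc0 mulr0 => /eqP; rewrite mulf_eq0 (negbTE q'c_neq0) orbF.
  by have := coprimep_root_neq0 cop_pq (introT eqP qc0) => /negbTE ->.
- move: cross_c; rewrite q'c0 mulr0 => /eqP; rewrite eq_sym mulf_eq0 (negbTE qc_neq0).
  by have := coprimep_root_neq0 cop_pq' (introT eqP q'c0) => /negbTE ->.
- by congr Some; apply/eqP; rewrite eqr_div // cross_c.
Qed.

Lemma expr_div_addr (F : fieldType) (a b x : F) n : b != 0 ->
  (a / b) ^+ n + x = (a ^+ n + x * b ^+ n) / b ^+ n.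
Proof. by move=> b_neq0; rewrite expr_div_n mulrDl mulfK ?expf_neq0. Qed.

Lemma specializes_fdt d beta c x : (0 < d)%N ->
  specializes beta c x -> specializes (fdt d beta) c (fdc d c x).
Proof.
move=> d_gt0 [p [q [cop_pq q_neq0 -> ->]]].
exists (p ^+ d + 'X * q ^+ d), (q ^+ d); split.
- rewrite coprimep_sym addrC coprimep_addl_mul.
  by apply/coprimep_expl/coprimep_expr; rewrite coprimep_sym.
- by rewrite expf_neq0.
- have qF_neq0 : q%:F != 0 :> ratfun K by rewrite tofrac_eq0.
  by rewrite /fdt (expr_div_addr _ _ _ qF_neq0) tofracD tofracM !tofracXn.
- rewrite /eval_pt /fdc horner_exp; have [qc0|qc_neq0] := eqVneq q.[c] 0.
    by rewrite qc0 expr0n eqn0Ngt d_gt0 eqxx.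
  rewrite expf_eq0 (negbTE qc_neq0) andbF; congr Some.
  by rewrite hornerD hornerM hornerX !horner_exp expr_div_addr.
Qed.

Lemma specializes_iter d beta c x n : (0 < d)%N ->
  specializes beta c x -> specializes (iter n (fdt d) beta) c (iter n (fdc d c) x).
Proof. by move=> d_gt0 spec_x; elim: n => //= n; apply: specializes_fdt. Qed.

End Specialization.

Lemma realizes_iter_pred (K : fieldType) d (alpha : ratfun K) M N :
  (0 < d)%N -> (0 < M)%N ->
  realizes d alpha M N <-> realizes d (iter M.-1 (fdt d) alpha) 1 N.
Proof.
move=> d_gt0 M_gt0; have portraitE c x := @has_portrait_iter_pred _ (fdc d c) x M N M_gt0.
split=> -[c [x [spec_x port_x]]]; exists c.
- exists (iter M.-1 (fdc d c) x); split; first exact: specializes_iter.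
  by apply/portraitE.
- have [x0 spec_x0] := specializes_exists alpha c.
  exists x0; split => //; apply/portraitE.
  by rewrite (specializes_unique (specializes_iter M.-1 d_gt0 spec_x0) spec_x).
Qed.

Theorem lemma3p3 (K : closedFieldType) (hchar : [pchar K] =i pred0)
  (alpha : {fraction {poly K}}) (M N d : nat) :
  (2 <= M)%N -> (1 <= N)%N -> (2 <= d)%N ->
  realizes d alpha M N <-> realizes d (iter M.-1 (fdt d) alpha) 1 N.
Proof.
move=> M_ge2 _ d_ge2.
by apply: realizes_iter_pred; [apply: leq_trans d_ge2 | apply: leq_trans M_ge2].
Qed.
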